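(* Let $k\ge 2$ be a non-square integer, let $0=t_0<t_1<t_2<\cdots$ be the increasing enumeration of all nonnegative integers $t$ such that $kT_t$ is triangular, and let $r$ be the rank and $\kappa=t_{r-1}+t_r$ as in Theorem 1 (so that $t_n=2(\kappa+1)t_{n-r}-t_{n-2r}+\kappa$ for all $n\ge 2r$). Then for every integer $n\ge r$, $$\kappa\left(t_n+2t_nt_{n-r}+t_{n-r}\right)-\left(t_n-t_{n-r}\right)^2=t_rt_{r-1}.$$
   Context: $T_m=\frac{m(m+1)}{2}$ denotes the $m$-th triangular number; an integer is triangular if it equals $T_m$ for some integer $m\ge0$. Theorem 1 (referenced): for non-square $k\ge2$ there is a positive integer $r$ such that with $\kappa=t_{r-1}+t_r$ one has $\kappa=\xi_r-\xi_{r-1}-1$ (where $\xi_n\ge0$ satisfies $T_{\xi_n}=kT_{t_n}$), $(t_{2r}-t_{r-1})/t_r=2\kappa+3$, and $t_n=2(\kappa+1)t_{n-r}-t_{n-2r}+\kappa$ for all $n\ge 2r$. *)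

From mathcomp Require Import all_boot all_order all_algebra.
Set Implicit Arguments. Unset Strict Implicit. Unset Printing Implicit Defensive.

Definition T (m : nat) : nat := (m * m.+1) %/ 2.

Definition triangular (x : nat) : Prop := exists m : nat, x = T m.

Definition is_square (k : nat) : Prop := exists m : nat, k = m ^ 2.

From mathcomp Require Import all_boot all_order all_algebra.
From mathcomp Require Import zify ring.
Import Order.TTheory GRing.Theory Num.Theory.
Local Open Scope ring_scope.

(* Writing X = 2a+1 and Y = 2b+1, the condition T_a = k T_b is the twisted
   Pell equation X^2 = k Y^2 + 1 - k, whose solutions can be multiplied and
   divided by units c + s sqrt k of the Pell equation c^2 - k s^2 = 1.
   The hypothesis kappa = xi_r - xi_{r-1} - 1 makes c = t_r + t_{r-1} + 1 and
   s = t_r - t_{r-1} such a unit, with 2 xi_r + 1 = c + k s, 2 t_r + 1 = s + c.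
   Multiplying the solution of index m by it gives the one of index m + r:
        t_{m+r} = s xi_m + c t_m + t_r.
   Indeed the product is a solution lying above t_{m+r-1}, and dividing the
   solution of index m + r by the unit shows that no solution lies strictly
   in between.  For n = m + r, the identity of the theorem is then a polynomial
   consequence of the Pell equations satisfied by the unit and by (xi_m, t_m);
   the value of t_{2r}, the recurrence of Theorem 1 and the non-squareness of
   k are not needed. *)

Lemma double_T m : (2 * T m = m * m.+1)%N.
Proof.
rewrite /T; have /dvdnP [q ->] : (2 %| m * m.+1)%N by rewrite dvdn2 oddM /= andbN.
by rewrite mulnK // mulnC.
Qed.

Lemma T_eq_pell (k a b : nat) : T a = (k * T b)%N <->
  (2 * a%:Z + 1) ^+ 2 = k%:Z * (2 * b%:Z + 1) ^+ 2 + 1 - k%:Z.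
Proof.
have ha := double_T a; have hb := double_T b.
by split=> [H|]; [rewrite H in ha; lia | nia].
Qed.

Lemma T_homo : {homo T : a b / (a < b)%N}.
Proof. by move=> a b ab; have := double_T a; have := double_T b; nia. Qed.

Lemma pell_sol_leq {k a1 b1 a2 b2 : nat} : (0 < k)%N ->
  T a1 = (k * T b1)%N -> T a2 = (k * T b2)%N -> (b1 <= b2)%N -> (a1 <= a2)%N.
Proof.
by move=> k0 e1 e2 b12; rewrite -(leq_mono T_homo) e1 e2 leq_pmul2l // (leq_mono T_homo).
Qed.

(* Multiplying a solution (X, Y) of X^2 = k Y^2 + 1 - k by a unit c + s sqrt k
   of the Pell equation gives again a solution: the norm form is multiplicative. *)
Lemma pell_mul {R : comPzRingType} {k c s X Y : R} :
  c ^+ 2 - k * s ^+ 2 = 1 -> X ^+ 2 = k * Y ^+ 2 + 1 - k ->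
  (c * X + k * s * Y) ^+ 2 = k * (s * X + c * Y) ^+ 2 + 1 - k.
Proof.
move=> unit sol; apply/eqP; rewrite -subr_eq0; apply/eqP.
transitivity ((c ^+ 2 - k * s ^+ 2 - 1) * (X ^+ 2 - k * Y ^+ 2)
              + (X ^+ 2 - (k * Y ^+ 2 + 1 - k))); first ring.
by rewrite unit sol !subrr; ring.
Qed.

(* Dividing by the unit is multiplying by its conjugate c - s sqrt k. *)
Lemma pell_div {R : comPzRingType} {k c s X Y : R} :
  c ^+ 2 - k * s ^+ 2 = 1 -> X ^+ 2 = k * Y ^+ 2 + 1 - k ->
  (c * X - k * s * Y) ^+ 2 = k * (c * Y - s * X) ^+ 2 + 1 - k.
Proof.
move=> unit sol; have unit' : c ^+ 2 - k * (- s) ^+ 2 = 1 by rewrite sqrrN.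
have -> : c * X - k * s * Y = c * X + k * - s * Y by ring.
have -> : c * Y - s * X = - s * X + c * Y by ring.
exact: pell_mul unit' sol.
Qed.

Section PellDivisionPositive.
Variables (R : realDomainType) (k c s X Y : R).
Hypotheses (k_ge1 : 1 <= k) (c_gt0 : 0 < c) (s_gt0 : 0 < s) (X_gt0 : 0 < X).
Hypothesis c_lt_Y : c < Y.
Hypothesis unit : c ^+ 2 - k * s ^+ 2 = 1.
Hypothesis sol : X ^+ 2 = k * Y ^+ 2 + 1 - k.

Let Y_gt0 : 0 < Y. Proof. exact: lt_trans c_gt0 c_lt_Y. Qed.
Let k_gt0 : 0 < k. Proof. exact: lt_le_trans ltr01 k_ge1. Qed.

Lemma pell_div_fst_gt0 : 0 < c * X - k * s * Y.
Proof.
have e : (c * X - k * s * Y) * (c * X + k * s * Y) = k * (Y - c) * (Y + c) + c ^+ 2.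
  transitivity (c ^+ 2 * (X ^+ 2 - (k * Y ^+ 2 + 1 - k))
     + k * Y ^+ 2 * (c ^+ 2 - k * s ^+ 2 - 1) + (k * (Y - c) * (Y + c) + c ^+ 2)).
    by ring.
  by rewrite sol unit !subrr; ring.
have conj_gt0 : 0 < c * X + k * s * Y by rewrite addr_gt0 ?mulr_gt0.
rewrite -(pmulr_lgt0 _ conj_gt0) e.
by rewrite addr_gt0 ?exprn_gt0 ?mulr_gt0 ?subr_gt0 ?addr_gt0.
Qed.

Lemma pell_div_snd_gt0 : 0 < c * Y - s * X.
Proof.
have e : (c * Y - s * X) * (c * Y + s * X) = Y ^+ 2 + s ^+ 2 * (k - 1).
  transitivity (- s ^+ 2 * (X ^+ 2 - (k * Y ^+ 2 + 1 - k))
     + Y ^+ 2 * (c ^+ 2 - k * s ^+ 2 - 1) + (Y ^+ 2 + s ^+ 2 * (k - 1))).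
    by ring.
  by rewrite sol unit !subrr; ring.
have conj_gt0 : 0 < c * Y + s * X by rewrite addr_gt0 ?mulr_gt0.
rewrite -(pmulr_lgt0 _ conj_gt0) e.
by apply: ltr_pwDl; rewrite ?exprn_gt0 // mulr_ge0 ?exprn_ge0 ?subr_ge0 // ltW.
Qed.
End PellDivisionPositive.

Lemma odd_int_nat (z w : int) : z = 2 * w + 1 -> 0 < z ->
  exists a : nat, z = 2 * a%:Z + 1.
Proof. by move=> zw z_gt0; exists `|w|%N; lia. Qed.

Lemma shift_invariant (k tr tp a b : int) :
  (tr + tp + 1) ^+ 2 - k * (tr - tp) ^+ 2 = 1 ->
  (2 * a + 1) ^+ 2 = k * (2 * b + 1) ^+ 2 + 1 - k ->
  let x := (tr - tp) * a + (tr + tp + 1) * b + tr in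
  (tp + tr) * (x + 2 * x * b + b) - (x - b) ^+ 2 = tr * tp.
Proof.
move=> unit sol x; apply: (@mulfI _ 4) => //; rewrite /x.
transitivity (4 * (tr * tp)
   - (tr - tp) ^+ 2 * ((2 * a + 1) ^+ 2 - (k * (2 * b + 1) ^+ 2 + 1 - k))
   + ((2 * b + 1) ^+ 2 - 1) * ((tr + tp + 1) ^+ 2 - k * (tr - tp) ^+ 2 - 1)).
  by ring.
by rewrite sol unit !subrr; ring.
Qed.

Section Shift.
Variables (k : nat) (t xi : nat -> nat) (r : nat).
Hypothesis k_gt1 : (1 < k)%N.
Hypothesis t_incr : forall n, (t n < t n.+1)%N.
Hypothesis t_enum : forall x, triangular (k * T x) <-> exists n, t n = x.
Hypothesis xi_sol : forall n, T (xi n) = (k * T (t n))%N.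
Hypothesis r_gt0 : (0 < r)%N.
Hypothesis xi_gap : xi r = (xi r.-1 + t r.-1 + t r + 1)%N.

Local Notation tr := (t r).
Local Notation tp := (t r.-1).

Lemma t_leq : {mono t : m n / (m <= n)%N}.
Proof. exact/leq_mono/(homo_ltn ltn_trans). Qed.

Lemma t_ltn : {mono t : m n / (m < n)%N}.
Proof. exact/leqW_mono/t_leq. Qed.

(* Since k T_0 = T_0, the enumeration starts at t_0 = 0, hence xi_0 = 0. *)
Lemma t0 : t 0 = 0%N.
Proof.
have [j tj0] : exists j, t j = 0%N by apply/t_enum; exists 0%N; rewrite muln0.
by have := leq0n j; rewrite -t_leq tj0 leqn0 => /eqP.
Qed.

Lemma xi0 : xi 0 = 0%N.
Proof. by have := double_T (xi 0); rewrite xi_sol t0 muln0; nia. Qed.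

Lemma tp_lt_tr : (tp < tr)%N.
Proof. by rewrite t_ltn prednK. Qed.

(* The coordinates of the unit c + s sqrt k of the Pell equation. *)
Definition s := (tr - tp)%N.
Definition c := (tr + tp + 1)%N.

Lemma s_int : s%:Z = tr%:Z - tp%:Z.
Proof. by rewrite /s subzn // ltnW // tp_lt_tr. Qed.

Lemma c_int : c%:Z = tr%:Z + tp%:Z + 1.
Proof. by rewrite /c; lia. Qed.

Lemma s_gt0 : (0 < s)%N.
Proof. by rewrite subn_gt0 tp_lt_tr. Qed.

(* Subtracting the Pell equations of xi_r and xi_{r-1}, using xi_gap. *)
Lemma xi_sum : (xi r + xi r.-1 + 1)%:Z = k%:Z * s%:Z.
Proof.
have /T_eq_pell hr := xi_sol r; have /T_eq_pell hp := xi_sol r.-1.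
have e : c%:Z * ((xi r + xi r.-1 + 1)%:Z - k%:Z * s%:Z) = 0.
  by rewrite s_int /c; rewrite xi_gap in hr *; lia.
have c_neq0 : c%:Z != 0 by rewrite /c addn1.
by move/eqP: e; rewrite mulf_eq0 (negbTE c_neq0) subr_eq0 => /eqP.
Qed.

Lemma two_xr : 2 * (xi r)%:Z + 1 = c%:Z + k%:Z * s%:Z.
Proof. by have := xi_sum; rewrite /c xi_gap; lia. Qed.

Lemma two_xp : 2 * (xi r.-1)%:Z + 1 = k%:Z * s%:Z - c%:Z.
Proof. by have := xi_sum; rewrite /c xi_gap; lia. Qed.

Lemma two_tr : 2 * tr%:Z + 1 = s%:Z + c%:Z.
Proof. by rewrite s_int /c; lia. Qed.

Lemma unit_cs : c%:Z ^+ 2 - k%:Z * s%:Z ^+ 2 = 1.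
Proof.
have /T_eq_pell := xi_sol r; rewrite two_xr two_tr => hr.
have e : (1 - k%:Z) * (c%:Z ^+ 2 - k%:Z * s%:Z ^+ 2 - 1) = 0.
  transitivity ((c%:Z + k%:Z * s%:Z) ^+ 2 - (k%:Z * (s%:Z + c%:Z) ^+ 2 + 1 - k%:Z)).
    by ring.
  by rewrite hr subrr.
have k_neq1 : 1 - k%:Z != 0 by rewrite subr_eq0 eq_sym; apply/negP => /eqP; lia.
by move/eqP: e; rewrite mulf_eq0 (negbTE k_neq1) subr_eq0 => /eqP.
Qed.

(* Multiplication by the unit, in the coordinates (a, b) of a solution
   (2a+1, 2b+1): the new b is phi a b and the new a is psi a b. *)
Definition phi (a b : nat) : nat := (s * a + c * b + tr)%N.
Definition psi (a b : nat) : nat := (c * a + k * s * b + xi r)%N.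

Lemma phi_int a b : (phi a b)%:Z = s%:Z * a%:Z + c%:Z * b%:Z + tr%:Z.
Proof. by rewrite /phi; lia. Qed.

Lemma two_phi a b : 2 * (phi a b)%:Z + 1 = s%:Z * (2 * a%:Z + 1) + c%:Z * (2 * b%:Z + 1).
Proof. by rewrite phi_int; have := two_tr; lia. Qed.

Lemma two_psi a b :
  2 * (psi a b)%:Z + 1 = c%:Z * (2 * a%:Z + 1) + k%:Z * s%:Z * (2 * b%:Z + 1).
Proof. by rewrite /psi; have := two_xr; lia. Qed.

Lemma phi_enum {a b : nat} : T a = (k * T b)%N -> exists j, t j = phi a b.
Proof.
move=> /T_eq_pell sol; apply/t_enum; exists (psi a b); apply/esym/T_eq_pell.
by rewrite two_psi two_phi; apply: pell_mul unit_cs sol.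
Qed.

Lemma phi_onto {j : nat} : (r <= j)%N -> exists a b, T a = (k * T b)%N /\ t j = phi a b.
Proof.
move=> rj; have /T_eq_pell sol := xi_sol j.
have tr_le_tj : (tr <= t j)%N by rewrite t_leq.
have k_ge1 : 1 <= k%:Z by rewrite lez_nat ltnW.
have c_gt0 : 0 < c%:Z by rewrite /c addn1.
have c_lt_Y : c%:Z < (2 * (t j)%:Z + 1) by have := tp_lt_tr; rewrite /c; lia.
have s_gt0' : 0 < s%:Z by rewrite ltz_nat s_gt0.
have X_gt0 : 0 < 2 * (xi j)%:Z + 1 by lia.
have [||a ea] := @odd_int_nat (c%:Z * (2 * (xi j)%:Z + 1) - k%:Z * s%:Z * (2 * (t j)%:Z + 1))
                   (c%:Z * (xi j)%:Z - k%:Z * s%:Z * (t j)%:Z - (xi r.-1)%:Z - 1).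
- by have := two_xp; lia.
- exact: pell_div_fst_gt0 k_ge1 c_gt0 s_gt0' X_gt0 c_lt_Y unit_cs sol.
have [||b eb] := @odd_int_nat (c%:Z * (2 * (t j)%:Z + 1) - s%:Z * (2 * (xi j)%:Z + 1))
                   (c%:Z * (t j)%:Z - s%:Z * (xi j)%:Z + tp%:Z).
- by rewrite s_int /c; lia.
- exact: pell_div_snd_gt0 k_ge1 c_gt0 s_gt0' X_gt0 c_lt_Y unit_cs sol.
exists a, b; split; first by apply/T_eq_pell; rewrite -ea -eb; exact: pell_div unit_cs sol.
have : 2 * (phi a b)%:Z + 1 = 2 * (t j)%:Z + 1.
  rewrite two_phi -ea -eb.
  transitivity ((2 * (t j)%:Z + 1) * (c%:Z ^+ 2 - k%:Z * s%:Z ^+ 2)); first by ring.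
  by rewrite unit_cs mulr1.
by lia.
Qed.

Lemma phi_strict {a1 b1 a2 b2 : nat} : T a1 = (k * T b1)%N -> T a2 = (k * T b2)%N ->
  (b1 < b2)%N -> (phi a1 b1 < phi a2 b2)%N.
Proof.
move=> e1 e2 b12; have a12 := pell_sol_leq (ltnW k_gt1) e1 e2 (ltnW b12).
rewrite /phi ltn_add2r -addnS; apply: leq_add; first exact: leq_mul.
by rewrite ltn_pmul2l // /c addn1.
Qed.

(* Hence phi is monotone on solutions (whose a is determined by b). *)
Lemma phi_leq {a1 b1 a2 b2 : nat} : T a1 = (k * T b1)%N -> T a2 = (k * T b2)%N ->
  (phi a1 b1 <= phi a2 b2)%N = (b1 <= b2)%N.
Proof.
move=> e1 e2; case: (ltngtP b1 b2) => [b12 | b21 | eb].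
- by rewrite ltnW // phi_strict.
- by rewrite leqNgt phi_strict.
have -> : a1 = a2 by apply: (incn_inj (leq_mono T_homo)); rewrite e1 e2 eb.
by rewrite eb !leqnn.
Qed.

Lemma phi_ltn {a1 b1 a2 b2 : nat} : T a1 = (k * T b1)%N -> T a2 = (k * T b2)%N ->
  (phi a1 b1 < phi a2 b2)%N = (b1 < b2)%N.
Proof. by move=> e1 e2; rewrite !ltnNge phi_leq. Qed.

Lemma t_succ_leq m j : (t m < t j)%N -> (t m.+1 <= t j)%N.
Proof. by rewrite t_ltn t_leq. Qed.

Lemma t_shift m : t (m + r) = phi (xi m) (t m).
Proof.
elim: m => [|m IH]; first by rewrite add0n /phi xi0 t0 !muln0.
have [j tj] := phi_enum (xi_sol m.+1).
have [a [b [sol_ab e_ab]]] := phi_onto (leq_addl m.+1 r).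
have [i ti] : exists i, t i = b by apply/t_enum; exists a.
apply/eqP; rewrite eqn_leq; apply/andP; split.
- rewrite -tj; apply: t_succ_leq.
  by rewrite tj IH (phi_ltn (xi_sol m) (xi_sol m.+1)) t_ltn.
- rewrite e_ab (phi_leq (xi_sol m.+1) sol_ab) -ti; apply: t_succ_leq.
  by rewrite ti -(phi_ltn (xi_sol m) sol_ab) -IH -e_ab t_ltn addSn.
Qed.

Lemma phi_invariant {a b : nat} : T a = (k * T b)%N ->
  let x := (phi a b)%:Z in
  (tp%:Z + tr%:Z) * (x + 2 * x * b%:Z + b%:Z) - (x - b%:Z) ^+ 2 = tr%:Z * tp%:Z.
Proof.
move=> /T_eq_pell sol; have := unit_cs; rewrite s_int c_int => unit.
by rewrite /= phi_int s_int c_int; apply: shift_invariant unit sol.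
Qed.

End Shift.

Arguments t_shift {k t xi r}.
Arguments phi_invariant {k t xi r}.

Theorem lemma2 (k : nat) (t xi : nat -> nat) (r : nat) :
  (2 <= k)%N -> ~ is_square k ->
  (* t is the increasing enumeration of {t >= 0 | k T_t is triangular} *)
  (forall n, (t n < t n.+1)%N) ->
  (forall x, triangular (k * T x) <-> exists n, t n = x) ->
  (* xi_n >= 0 with T_{xi_n} = k T_{t_n} *)
  (forall n, T (xi n) = (k * T (t n))%N) ->
  (* r is the rank of Theorem 1, kappa = t_{r-1} + t_r *)
  (0 < r)%N ->
  let kappa : int := (t r.-1)%:Z + (t r)%:Z in
  kappa = (xi r)%:Z - (xi r.-1)%:Z - 1 ->
  (t (2 * r)%N)%:Z - (t r.-1)%:Z = (2 * kappa + 3) * (t r)%:Z ->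
  (forall n, (2 * r <= n)%N ->
     (t n)%:Z = 2 * (kappa + 1) * (t (n - r)%N)%:Z - (t (n - 2 * r)%N)%:Z + kappa) ->
  forall n, (r <= n)%N ->
    kappa * ((t n)%:Z + 2 * (t n)%:Z * (t (n - r)%N)%:Z + (t (n - r)%N)%:Z)
      - ((t n)%:Z - (t (n - r)%N)%:Z) ^+ 2
    = (t r)%:Z * (t r.-1)%:Z.
Proof.
move=> k_gt1 _ t_incr t_enum xi_sol r_gt0 kappa kappa_xi _ _ n rn.
have xi_gap : xi r = (xi r.-1 + t r.-1 + t r + 1)%N by move: kappa_xi; rewrite /kappa; lia.
have shift : t n = phi t r (xi (n - r)%N) (t (n - r)%N).
  by rewrite -[in LHS](subnK rn) (t_shift k_gt1 t_incr t_enum xi_sol r_gt0 xi_gap).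
rewrite /kappa shift.
exact: phi_invariant k_gt1 t_incr xi_sol r_gt0 xi_gap _ _ (xi_sol (n - r)%N).
Qed.
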